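(* Let $a=\{a_k\}_{k=0}^\infty$ be a real sequence with $a_0>0$, $a_k\geq0$ for all $k$, $\lim_{k\to\infty}a_k=0$ and $\sum_{k=0}^\infty a_k=\infty$. Define $\{b_k\}_{k=0}^\infty$ by $b_0=1/a_0$ and $b_k=-\frac{1}{a_0}\sum_{j=0}^{k-1}a_{k-j}b_j$ for $k\geq1$, and let $u=\{u_k\}_{k=0}^\infty$ with $u_k=\sum_{j=0}^k b_j$. If $a$ has decay rate $\alpha\in[0,1]$ and $u$ has decay rate $\upsilon$, then $\upsilon\leq 1-\alpha$.
   Context: For $p\geq1$, $l^p$ denotes the space of real sequences $x=\{x_k\}_{k\ge0}$ with $\|x\|_p^p=\sum_{k=0}^\infty|x_k|^p<\infty$. For a sequence $x$ with $x_k\to0$, its decay rate is the number $1/p\in[0,1]$, where $p\geq1$ is such that $x\notin l^p$ but $x\in l^q$ for every $q>p$. The sequence $\{b_k\}$ gives the entries of the inverse of the half-infinite lower triangular Toeplitz matrix $A$ with entries $A_{ij}=a_{i-j}$ ($i\ge j$), and $u$ is called the fundamental matrix of $a$. *)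

From HB Require Import structures.
From mathcomp Require Import all_boot all_order all_algebra.
From mathcomp Require Import all_classical all_reals all_analysis.
Set Implicit Arguments. Unset Strict Implicit. Unset Printing Implicit Defensive.
Import Order.TTheory GRing.Theory Num.Theory.
Import numFieldNormedType.Exports.
Local Open Scope classical_set_scope.
Local Open Scope ring_scope.

Definition in_lp (R : realType) (p : R) (x : R^nat) : Prop :=
  cvg (series (fun k => `|x k| `^ p) @ \oo).

Definition has_decay_rate (R : realType) (x : R^nat) (r : R) : Prop :=
  x @ \oo --> (0 : R) /\ 0 <= r <= 1 /\
  (0 < r -> ~ in_lp r^-1 x /\ (forall q : R, r^-1 < q -> in_lp q x)) /\
  (r = 0 -> forall q : R, 1 <= q -> ~ in_lp q x).

From HB Require Import structures.
From mathcomp Require Import all_boot all_order all_algebra.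
From mathcomp Require Import all_classical all_reals all_analysis.
From mathcomp Require Import ring lra.
Set Implicit Arguments.
Unset Strict Implicit.
Unset Printing Implicit Defensive.
Import Order.TTheory GRing.Theory Num.Theory.
Import numFieldNormedType.Exports.
Local Open Scope classical_set_scope.
Local Open Scope ring_scope.

(* Since b is the convolution inverse of a, the convolution of a with u is the
   constant sequence 1, so for every n
     n + 1 = sum_(k <= n) (a * u)_k <= (sum_(k <= n) |a_k|) (sum_(k <= n) |u_k|).
   If a is in l^q for q > 1/alpha and u in l^q' for q' > 1/upsilon, Hoelder-type
   bounds make the two factors O(n^(1 - alpha + e)) and O(n^(1 - upsilon + e)),
   so n^(alpha + upsilon - 1 - 2e) stays bounded, forcing upsilon <= 1 - alpha. *)

Lemma conv_partial_sums (R : pzSemiRingType) (f g : nat -> R) k :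
  \sum_(0 <= j < k.+1) f (k - j)%N * (\sum_(0 <= i < j.+1) g i) =
  \sum_(0 <= i < k.+1) \sum_(0 <= j < i.+1) f (i - j)%N * g j.
Proof.
elim: k => [|k IH]; first by rewrite !big_nat1.
rewrite [RHS]big_nat_recr //= -IH big_nat_recl // big_nat1.
rewrite [X in _ = _ + X]big_nat_recl // !subn0 addrCA; congr (_ + _).
under eq_bigr => j _ do rewrite subSS big_nat_recr //= mulrDr.
by rewrite big_split /=; under [X in _ = _ + X]eq_bigr => j _ do rewrite subSS.
Qed.

Lemma sum_conv_exchange (R : comPzSemiRingType) (f g : nat -> R) n :
  \sum_(0 <= k < n) \sum_(0 <= j < k.+1) f (k - j)%N * g j =
  \sum_(0 <= j < n) g j * \sum_(0 <= i < n - j) f i.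
Proof.
elim: n => [|n IH]; first by rewrite !big_geq.
rewrite big_nat_recr //= IH [in RHS]big_nat_recr //= subSnn big_nat1.
rewrite (big_nat_recr n) //= subnn addrA (mulrC (g n)); congr (_ + _).
rewrite -big_split /=; apply: eq_big_nat => j /andP[_ jn].
by rewrite (subSn (ltnW jn)) (big_nat_recr (n - j)) //= mulrDr (mulrC (f _)).
Qed.

Lemma conv_inverse_delta (R : fieldType) (a b : nat -> R) :
  a 0%N != 0 ->
  b 0%N = (a 0%N)^-1 ->
  (forall k, (0 < k)%N ->
     b k = - (a 0%N)^-1 * \sum_(0 <= j < k) a (k - j)%N * b j) ->
  forall k, \sum_(0 <= j < k.+1) a (k - j)%N * b j = (k == 0%N)%:R.
Proof.
move=> a0 b0 brec [|k]; first by rewrite big_nat1 subnn b0 mulfV.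
rewrite big_nat_recr //= subnn brec //.
by rewrite mulrA mulrN mulfV // mulN1r subrr.
Qed.

Lemma conv_inverse_partial_sums (R : fieldType) (a b : nat -> R) :
  a 0%N != 0 ->
  b 0%N = (a 0%N)^-1 ->
  (forall k, (0 < k)%N ->
     b k = - (a 0%N)^-1 * \sum_(0 <= j < k) a (k - j)%N * b j) ->
  forall k, \sum_(0 <= j < k.+1) a (k - j)%N * (\sum_(0 <= i < j.+1) b i) = 1.
Proof.
move=> a0 b0 brec k; rewrite conv_partial_sums.
rewrite (eq_bigr _ (fun i _ => conv_inverse_delta a0 b0 brec i)).
by rewrite big_nat_recl //= big1 ?addr0.
Qed.

Lemma sum_conv_le_norm (R : realDomainType) (f g : nat -> R) n :
  \sum_(0 <= k < n) \sum_(0 <= j < k.+1) f (k - j)%N * g j <=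
  (\sum_(0 <= j < n) `|g j|) * \sum_(0 <= i < n) `|f i|.
Proof.
apply: (le_trans (y := \sum_(0 <= k < n)
    \sum_(0 <= j < k.+1) `|f (k - j)%N| * `|g j|)).
  apply: ler_sum => k _; apply: (le_trans (ler_norm _)).
  apply: (le_trans (ler_norm_sum _ _ _)).
  by apply: ler_sum => j _; rewrite normrM.
rewrite (@sum_conv_exchange _ (fun i => `|f i|)) mulr_suml.
apply: ler_sum_nat => j /andP[_ jn]; apply: ler_wpM2l => //.
rewrite [X in _ <= X](big_cat_nat _ (n := n - j)) ?leq_subr //= lerDl.
exact: sumr_ge0.
Qed.

Section PowerBounds.
Variable R : realType.

Lemma le_add_powR_mul (p y t : R) : 1 <= p -> 0 <= y -> 0 < t ->
  y <= t + y `^ p * t `^ (1 - p).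
Proof.
move=> p1 y0 t0.
have h0 : 0 <= y `^ p * t `^ (1 - p) by rewrite mulr_ge0 ?powR_ge0.
have [yt|ty] := leP y t; first by lra.
have tp : 0 < t `^ (p - 1) by rewrite powR_gt0.
have -> : y `^ p * t `^ (1 - p) = y * (y `^ (p - 1) / t `^ (p - 1)).
  rewrite -(mulr_powRB1 y0) ?(lt_le_trans _ p1) // -mulrA; congr (_ * _).
  by rewrite -powRN opprB.
have : y <= y * (y `^ (p - 1) / t `^ (p - 1)).
  apply: ler_peMr => //; rewrite ler_pdivlMr // mul1r.
  by apply: ge0_ler_powR; rewrite ?nnegrE; lra.
lra.
Qed.

Lemma in_lp_partial_sum_bound (x : R^nat) (s : R) :
  0 < s -> s <= 1 -> in_lp s^-1 x ->
  exists K, forall n : nat,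
    \sum_(0 <= k < n.+1) `|x k| <= K * n.+1%:R `^ (1 - s).
Proof.
move=> s0 s1 hx; set p := s^-1.
have p1 : 1 <= p by rewrite /p invf_ge1.
set C := limn (series (fun k => `|x k| `^ p)).
have leC n : series (fun k => `|x k| `^ p) n <= C.
  apply: nondecreasing_cvgn_le => //.
  by move=> m1 m2 le12; apply: nondecreasing_series => // k _ _.
have C0 : 0 <= C by have := leC 0%N; rewrite /series /= big_geq.
exists (1 + C) => n.
set N : R := n.+1%:R.
have N0 : 0 < N by rewrite /N ltr0n.
set t := N `^ (- s).
have t0 : 0 < t by rewrite powR_gt0.
have Nt : N * t = N `^ (1 - s).
  by rewrite /t -{1}(powRr1 (ltW N0)) -powRD // (gt_eqF N0) implybT.
have tp : t `^ (1 - p) = N `^ (1 - s).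
  by rewrite /t -powRrM; congr (_ `^ _); rewrite /p; field; rewrite gt_eqF.
apply: (le_trans (y := \sum_(0 <= k < n.+1) (t + `|x k| `^ p * t `^ (1 - p)))).
  by apply: ler_sum => k _; apply: le_add_powR_mul.
rewrite big_split /= -mulr_suml tp.
have -> : \sum_(0 <= i < n.+1) t = N `^ (1 - s).
  by rewrite sumr_const_nat subn0 -Nt mulr_natl.
have := leC n.+1; rewrite /series /=.
have := powR_ge0 N (1 - s).
nra.
Qed.

Lemma decay_rate_partial_sum_bound (x : R^nat) (r s : R) :
  has_decay_rate x r -> 0 < s < r ->
  exists K, forall n : nat,
    \sum_(0 <= k < n.+1) `|x k| <= K * n.+1%:R `^ (1 - s).
Proof.
move=> [_ [/andP[_ r1] [rpos _]]] /andP[s0 sr].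
apply: in_lp_partial_sum_bound => //; first by rewrite ltW // (lt_le_trans sr).
by apply: (rpos (lt_trans s0 sr)).2; rewrite ltf_pV2 ?posrE // (lt_trans s0).
Qed.

Lemma powR_nat_unbounded (d K : R) : 0 < d ->
  exists n : nat, K < n.+1%:R `^ d.
Proof.
move=> d0; wlog K0 : K / 0 <= K.
  move=> le0_unbounded; have [n Kn] := le0_unbounded `|K| (normr_ge0 K).
  by exists n; rewrite (le_lt_trans (ler_norm K)).
pose m := Num.Def.archi_bound (K `^ d^-1); exists m.
have -> : K = (K `^ d^-1) `^ d by rewrite -powRrM mulVf ?lt0r_neq0 // powRr1.
apply: gt0_ltr_powR => //; rewrite ?nnegrE ?powR_ge0 //.
by apply: (lt_le_trans (archi_boundP (powR_ge0 K d^-1))); rewrite ler_nat.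
Qed.

Lemma conv_eq1_partial_sums_growth (f g : R^nat) (s t Kf Kg : R) :
  (forall k, \sum_(0 <= j < k.+1) f (k - j)%N * g j = 1) ->
  (forall n : nat, \sum_(0 <= k < n.+1) `|f k| <= Kf * n.+1%:R `^ (1 - s)) ->
  (forall n : nat, \sum_(0 <= k < n.+1) `|g k| <= Kg * n.+1%:R `^ (1 - t)) ->
  forall n : nat, n.+1%:R `^ (s + t - 1) <= Kf * Kg.
Proof.
move=> conv1 hf hg n; set N : R := n.+1%:R.
have N0 : 0 < N by rewrite ltr0n.
have powRDN r r' : N `^ (r + r') = N `^ r * N `^ r'.
  by rewrite powRD // (gt_eqF N0) implybT.
rewrite -(ler_pM2r (powR_gt0 (1 - s + (1 - t)) N0)) -powRDN.
have -> : s + t - 1 + (1 - s + (1 - t)) = 1 by ring.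
rewrite powRr1 ?(ltW N0) // powRDN mulrACA.
have := sum_conv_le_norm f g n.+1.
rewrite (eq_bigr (fun=> 1)) // sumr_const_nat subn0 => /le_trans; apply.
by rewrite mulrC; apply: ler_pM; rewrite ?sumr_ge0 ?hf ?hg.
Qed.

End PowerBounds.

Theorem theorem3 (R : realType) (a b : R^nat) (alpha upsilon : R) :
  0 < a 0%N ->
  (forall k, 0 <= a k) ->
  a @ \oo --> (0 : R) ->
  series a @ \oo --> +oo ->
  b 0%N = (a 0%N)^-1 ->
  (forall k, (0 < k)%N ->
     b k = - (a 0%N)^-1 * \sum_(0 <= j < k) a (k - j)%N * b j) ->
  has_decay_rate a alpha ->
  has_decay_rate (fun k => \sum_(0 <= j < k.+1) b j) upsilon ->
  upsilon <= 1 - alpha.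
Proof.
move=> a0 _ _ _ b0 brec ha hu; rewrite leNgt; apply/negP => gt_upsilon.
have [[_ [/andP[al0 al1] _]] [_ [/andP[up0 up1] _]]] := (ha, hu).
set d := (alpha + upsilon - 1) / 3.
have [Ka hKa] := decay_rate_partial_sum_bound ha (s := alpha - d)
  ltac:(apply/andP; split; rewrite /d; lra).
have [Ku hKu] := decay_rate_partial_sum_bound hu (s := upsilon - d)
  ltac:(apply/andP; split; rewrite /d; lra).
have conv1 := conv_inverse_partial_sums (lt0r_neq0 a0) b0 brec.
have growth := conv_eq1_partial_sums_growth conv1 hKa hKu.
have [n] := @powR_nat_unbounded _ (alpha - d + (upsilon - d) - 1) (Ka * Ku)
  ltac:(rewrite /d; lra).
by rewrite ltNge growth.
Qed.
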